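(* For $N$ a positive integer let $J_N$ be the number of vectors $(\delta_0,\ldots,\delta_N)\in\{-1,1\}^{N+1}$ with $\sum_{i=0}^N\delta_i\binom{N}{i}=0$. Then for $N=2^n$ with $n\ge 3$ sufficiently large, $$J_{2^n}\le 0.3258\cdot 2^{3\cdot 2^{n-2}-\frac{n-3}{2}}.$$ *)

From mathcomp Require Import all_boot all_order all_algebra.
Set Implicit Arguments. Unset Strict Implicit. Unset Printing Implicit Defensive.
Import GRing.Theory Num.Theory.

(* sign vector delta in {-1,1}^(N+1), encoded by d : 'I_(N+1) -> bool,
   delta_i = 1 if d i, -1 otherwise *)
Definition sgn_of (b : bool) : int := if b then 1%R else (-1)%R.

Definition J (N : nat) : nat :=
  #|[set d : {ffun 'I_N.+1 -> bool} |
      (\sum_(i < N.+1) sgn_of (d i) * ('C(N, i))%:Z)%R == 0%R]|.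

(* Call a_0, ..., a_k superincreasing if each a_j exceeds a_0 + ... + a_(j-1).
   If C(N,0), ..., C(N,k) are superincreasing, two sign vectors with zero
   binomial sum that agree on the coordinates of index > k agree everywhere: at
   the largest index j where they differ, 2 C(N,j) would have to be balanced by
   at most 2 (C(N,0) + ... + C(N,j-1)).  Restriction to the top N - k
   coordinates is thus injective on the solutions, so J_N <= 2^(N-k).  Since
   C(N,i+1) >= 2 C(N,i) whenever 3i + 2 <= N, any k with 3k <= N + 1 will do;
   for N = 2^n (n >= 7) the choice k = 2^(n-2) + n gives
   J_N <= 2^(3 2^(n-2) - n), and 2^(-n) <= 0.3258 2^(-(n-3)/2)
   as (n+3)/2 >= 2. *)

From Stdlib Require Import Reals Lia Lra.
From mathcomp Require Import ssreflect.
From mathcomp Require zify.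

Set Implicit Arguments.
Unset Strict Implicit.
Unset Printing Implicit Defensive.

Module BinomialSignSums.
Import all_boot all_order all_algebra zify.
Import Order.TTheory GRing.Theory Num.Theory.
Local Open Scope ring_scope.

Definition superincreasing_until (R : numDomainType) (k : nat) (a : nat -> R)
  : Prop :=
  forall j, (j <= k)%N -> \sum_(0 <= i < j) a i < a j.

Lemma doubling_superincreasing (R : numDomainType) (k : nat) (a : nat -> R) :
  0 < a 0%N -> (forall i, (i < k)%N -> 2 * a i <= a i.+1) ->
  superincreasing_until k a.
Proof.
move=> a0_gt0 a_double; elim=> [|j IHj] jk; first by rewrite big_geq.
rewrite big_nat_recr //=; apply: (lt_le_trans _ (a_double j jk)).
by rewrite mulr2n mulrDl mul1r ltrD2r IHj // ltnW.
Qed.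

Lemma superincreasing_zero_sum_last (R : numDomainType) (e a : nat -> R) j :
  (forall i, 0 <= a i) -> (forall i, (i < j)%N -> `|e i| <= 2) ->
  \sum_(0 <= i < j) a i < a j -> \sum_(0 <= i < j.+1) e i * a i = 0 ->
  `|e j| < 2.
Proof.
move=> a_ge0 e_le2 a_sup.
rewrite big_nat_recr //= => /eqP; rewrite addrC addr_eq0 => /eqP ej_aj.
have aj_gt0 : 0 < a j by apply: le_lt_trans a_sup; apply: sumr_ge0.
rewrite -(ltr_pM2r aj_gt0) -{1}(ger0_norm (ltW aj_gt0)) -normrM ej_aj normrN.
apply: le_lt_trans (ler_norm_sum _ _ _) _.
apply: le_lt_trans (_ : _ <= \sum_(0 <= i < j) 2 * a i) _.
  rewrite !big_nat; apply: ler_sum => i /andP[_ ij].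
  by rewrite normrM (ger0_norm (a_ge0 i)) ler_wpM2r ?e_le2.
by rewrite -mulr_sumr ltr_pM2l.
Qed.

Lemma normr_sgnB (b c : bool) : `|sgn_of b - sgn_of c| = 2 *+ (b != c) :> int.
Proof. by case: b; case: c. Qed.

Lemma superincreasing_signs_eq (a : nat -> int) k m (s t : nat -> bool) :
  (forall i, 0 <= a i) -> superincreasing_until k a ->
  (forall i, (k < i < m)%N -> s i = t i) ->
  \sum_(0 <= i < m) sgn_of (s i) * a i = \sum_(0 <= i < m) sgn_of (t i) * a i ->
  forall i, (i < m)%N -> s i = t i.
Proof.
move=> a_ge0 a_sup st_top st_sum i0 i0m; apply/eqP; apply: contraT => st_i0.
pose P i := (i < m)%N && (s i != t i).
have P_ex : exists i, P i by exists i0; rewrite /P i0m.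
have P_bounded i : P i -> (i <= m)%N by case/andP=> /ltnW.
case: (ex_maxnP P_ex P_bounded) => j /andP[jm st_j] j_max.
have agree_above i : (j < i < m)%N -> s i = t i.
  case/andP=> ji im; apply/eqP; apply: contraTT ji => st_i.
  by rewrite -leqNgt j_max // /P im.
have jk : (j <= k)%N.
  by rewrite leqNgt; apply: contra st_j => kj; rewrite st_top ?kj.
pose e i := sgn_of (s i) - sgn_of (t i).
have e_tail : \sum_(j.+1 <= i < m) e i * a i = 0.
  rewrite big_nat_cond big1 // => i /andP[/andP[ji im] _].
  by rewrite /e (agree_above i) ?subrr ?mul0r // ji.
have e_sum : \sum_(0 <= i < j.+1) e i * a i = 0.
  have : \sum_(0 <= i < m) e i * a i = 0.
    rewrite /e; under eq_bigr do rewrite mulrBl.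
    by rewrite sumrB st_sum subrr.
  by rewrite (@big_cat_nat _ _ _ j.+1 0 m) //= e_tail addr0.
have := superincreasing_zero_sum_last a_ge0 _ (a_sup j jk) e_sum.
rewrite /e normr_sgnB st_j ltxx; apply=> i _.
by rewrite normr_sgnB; case: (s i != t i).
Qed.

Lemma J_le_exp2_superincreasing N k : (k <= N)%N ->
  superincreasing_until k (fun i => ('C(N, i))%:Z) -> (J N <= 2 ^ (N - k))%N.
Proof.
move=> kN bin_sup.
set A := [set d : {ffun 'I_N.+1 -> bool} |
  \sum_(i < N.+1) sgn_of (d i) * ('C(N, i))%:Z == 0].
pose top (d : {ffun 'I_N.+1 -> bool}) : {ffun 'I_(N - k) -> bool} :=
  [ffun t : 'I_(N - k) => d (inord (k.+1 + t))].
have nat_sum (d : {ffun 'I_N.+1 -> bool}) :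
    \sum_(0 <= i < N.+1) sgn_of (d (inord i)) * ('C(N, i))%:Z =
    \sum_(i < N.+1) sgn_of (d i) * ('C(N, i))%:Z.
  by rewrite big_mkord; apply: eq_bigr => i _; rewrite inord_val.
have top_inj : {in A &, injective top}.
  move=> d d'; rewrite !inE => /eqP d_sum /eqP d'_sum top_eq.
  apply/ffunP => i; rewrite -(inord_val i).
  apply: (superincreasing_signs_eq (m := N.+1) (s := fun i => d (inord i))
    (t := fun i => d' (inord i)) _ bin_sup) => //; last first.
    by rewrite !nat_sum d_sum d'_sum.
  move=> {}i /andP[ki iN]; have ti : (i - k.+1 < N - k)%N by lia.
  move/ffunP/(_ (Ordinal ti)): top_eq; rewrite !ffunE /=.
  by rewrite subnKC.
rewrite /J -/A -(card_in_imset top_inj); apply: leq_trans (max_card _) _.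
by rewrite card_ffun card_bool card_ord.
Qed.

Lemma bin_double_le N i : (3 * i + 2 <= N)%N -> (2 * 'C(N, i) <= 'C(N, i.+1))%N.
Proof.
move=> iN; rewrite -(leq_pmul2l (ltn0Sn i)) mul_bin_left mulnA.
by apply: leq_mul => //; lia.
Qed.

Lemma bin_superincreasing N k : (3 * k <= N.+1)%N ->
  superincreasing_until k (fun i => ('C(N, i))%:Z).
Proof.
move=> kN; apply: doubling_superincreasing => [|i ik]; first by rewrite bin0.
by rewrite -[2]/(2%:Z) -PoszM lez_nat bin_double_le //; lia.
Qed.

Lemma J_le_exp2 N k : (3 * k <= N.+1)%N -> (J N <= 2 ^ (N - k))%N.
Proof.
move=> kN; apply: J_le_exp2_superincreasing; first by lia.
exact: bin_superincreasing.
Qed.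

Lemma mul3_leq_exp2 n : (7 <= n)%N -> (3 * n <= 2 ^ (n - 2))%N.
Proof.
elim: n => // n IHn; rewrite leq_eqVlt => /predU1P[<- //|n7].
rewrite subSn ?expnS; last by lia.
by have := IHn n7; lia.
Qed.

Lemma J_pow2_bound n : (7 <= n)%N -> (J (2 ^ n) <= 2 ^ (3 * 2 ^ (n - 2) - n))%N.
Proof.
move=> n7; have := mul3_leq_exp2 n7.
have -> : (2 ^ n = 4 * 2 ^ (n - 2))%N.
  by rewrite -[in LHS](subnKC (_ : 2 <= n)%N) ?expnD //; lia.
move: (2 ^ (n - 2))%N => p grow.
have -> : (3 * p - n = 4 * p - (p + n))%N by lia.
by apply: J_le_exp2; lia.
Qed.

Lemma Natpow_expn m n : Nat.pow m n = (m ^ n)%N.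
Proof. by elim: n => //= n ->; rewrite expnS. Qed.

Local Open Scope R_scope.

Lemma INR_J_pow2_bound n : (7 <= n)%coq_nat ->
  INR (J (Nat.pow 2 n)) <= Rpower 2 (3 * 2 ^ (n - 2) - INR n).
Proof.
move=> /ssrnat.leP n7.
have n_le : (n <= 3 * 2 ^ (n - 2))%N by have := mul3_leq_exp2 n7; lia.
have INR2 : INR 2 = 2 by rewrite S_INR INR_1; lra.
have INR3 : INR 3 = 3 by rewrite S_INR INR2; lra.
rewrite Natpow_expn.
apply: Rle_trans (le_INR _ _ (ssrnat.leP (J_pow2_bound n7))) _.
rewrite -Natpow_expn pow_INR INR2 -Rpower_pow; last by lra.
rewrite minus_INR; last exact/ssrnat.leP.
by rewrite mult_INR -Natpow_expn pow_INR INR2 INR3; apply: Rle_refl.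
Qed.

End BinomialSignSums.

Open Scope R_scope.

Lemma Rpower2_sub_le (x y : R) : 1 <= y ->
  Rpower 2 (x - y) <= 3258 / 10000 * Rpower 2 (x - (y - 3) / 2).
Proof.
move=> y_ge1.
have -> : x - (y - 3) / 2 = (x - y) + (y + 3) / 2 by field.
rewrite Rpower_plus.
have pos : 0 < Rpower 2 (x - y) by apply: exp_pos.
have : Rpower 2 (INR 2) <= Rpower 2 ((y + 3) / 2).
  by apply: Rle_Rpower; rewrite /=; lra.
rewrite Rpower_pow /=; nra.
Qed.

Theorem theorem5 :
  exists n0 : nat, forall n : nat, (3 <= n)%nat -> (n0 <= n)%nat ->
    INR (J (2 ^ n)) <=
      (3258 / 10000) * Rpower 2 (3 * 2 ^ (n - 2) - (INR n - 3) / 2).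
Proof.
exists 7%nat => n _ n7.
apply: Rle_trans (BinomialSignSums.INR_J_pow2_bound n7) _.
apply: Rpower2_sub_le; apply: (le_INR 1); lia.
Qed.
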